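(* Let $0<\varpi<2$ and $0\le\beta_s\le1$. Let $X$ be a binary random variable with distribution $(p,1-p)$, $p\in[0,1]$, and let $Y$ be the binary output of the channel with transition matrix $$p(y\mid x)=\begin{pmatrix}1-\beta_s&\beta_s\\ \beta_s&1-\beta_s\end{pmatrix}.$$ Then the message importance loss capacity is $$C(\varpi,\beta_s)=\max_{p\in[0,1]}\big\{L(\varpi,X)-L(\varpi,X\mid Y)\big\}=e^{\varpi/2}-\big(\beta_s e^{\varpi(1-\beta_s)}+(1-\beta_s)e^{\varpi\beta_s}\big),$$ the maximum being attained at the uniform input $p=1/2$.
   Context: For a discrete random variable $X$ with distribution $\{p(x_1),\dots,p(x_n)\}$ the message importance measure (MIM) is $L(\varpi,X)=\sum_i p(x_i)e^{\varpi(1-p(x_i))}$. For a pair $(X,Y)$ with joint law $p(x_i)p(y_j\mid x_i)$, $p(y_j)=\sum_i p(x_i)p(y_j\mid x_i)$ and $p(x_i\mid y_j)=p(x_i)p(y_j\mid x_i)/p(y_j)$, the conditional message importance measure (CMIM) is $L(\varpi,X\mid Y)=\sum_{j:\,p(y_j)>0} p(y_j)\sum_i p(x_i\mid y_j)e^{\varpi(1-p(x_i\mid y_j))}$. For a fixed transition matrix $p(y\mid x)$, the message importance loss capacity (MILC) is $C=\max_{p(x)}\{L(\varpi,X)-L(\varpi,X\mid Y)\}$, the maximum over input distributions. *)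

From Stdlib Require Import Reals Lra.
Open Scope R_scope.

(* Binary alphabets are indexed by bool: true = x_1 (resp. y_1), false = x_2 (resp. y_2). *)

Definition bsum (f : bool -> R) : R := f true + f false.

Definition MIM (w : R) (px : bool -> R) : R :=
  bsum (fun x => px x * exp (w * (1 - px x))).

Definition out_law (W : bool -> bool -> R) (px : bool -> R) (y : bool) : R :=
  bsum (fun x => px x * W x y).

Definition posterior (W : bool -> bool -> R) (px : bool -> R) (x y : bool) : R :=
  px x * W x y / out_law W px y.

Definition CMIM (w : R) (W : bool -> bool -> R) (px : bool -> R) : R :=
  bsum (fun y =>
    if Rlt_dec 0 (out_law W px y)
    then out_law W px y *
         bsum (fun x => posterior W px x y * exp (w * (1 - posterior W px x y)))
    else 0).

Definition bin_input (p : R) : bool -> R := fun x => if x then p else 1 - p.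

Definition bsc (b : R) : bool -> bool -> R :=
  fun x y => if Bool.eqb x y then 1 - b else b.

Definition mim_loss (w b p : R) : R :=
  MIM w (bin_input p) - CMIM w (bsc b) (bin_input p).

From Stdlib Require Import Reals Lra.
From Coquelicot Require Import Coquelicot.
Open Scope R_scope.

(* Write the input as p = (1 + tanh t)/2 and the crossover as b = (1 + tanh k)/2.
   Then the MIM of (p, 1 - p) is e^(w/2) C(t) / cosh t, where C = cosh o tilt and
   tilt u = u - (w/2) tanh u; the two output letters have probabilities
   cosh (t -+ k) / (2 cosh t cosh k) and posteriors of parameter t -+ k.  Clearing
   denominators, the bound becomes
     2 C(t) cosh k + 2 C(k) cosh t <= 2 cosh t cosh k + C(t - k) + C(t + k),
   which follows from C <= cosh together with 2 C(t) C(k) <= C(t + k) + C(t - k).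
   For w <= 2, tilt is odd and, on [0, oo), squeezed between 0 and the identity,
   superadditive and midpoint convex; so (tilt (t + k), tilt (t - k)) majorizes
   (tilt t + tilt k, tilt t - tilt k) and the convexity of cosh concludes.  When p or b
   is 0 or 1 the conditional MIM equals 1. *)

Lemma exp_le_exp x y : x <= y -> exp x <= exp y.
Proof. intros [h | ->]; [left; apply exp_increasing |]; lra. Qed.

Lemma cosh_opp x : cosh (- x) = cosh x.
Proof. unfold cosh. rewrite Ropp_involutive. lra. Qed.

Lemma cosh_pos x : 0 < cosh x.
Proof. unfold cosh. pose proof (exp_pos x). pose proof (exp_pos (- x)). lra. Qed.

Lemma cosh_le u v : 0 <= u -> u <= v -> cosh u <= cosh v.
Proof.
  intros hu huv. unfold cosh. rewrite !exp_Ropp.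
  pose proof (exp_le_exp _ _ hu) as h0. rewrite exp_0 in h0.
  pose proof (exp_le_exp _ _ huv).
  assert (/ exp v <= / exp u) by (apply Rinv_le_contravar; lra).
  assert (/ exp u - / exp v = (exp v - exp u) / (exp u * exp v)) by (field; lra).
  assert ((exp v - exp u) / (exp u * exp v) <= exp v - exp u).
  { unfold Rdiv. rewrite <- (Rmult_1_r (exp v - exp u)) at 2.
    apply Rmult_le_compat_l; [lra |].
    rewrite <- Rinv_1. apply Rinv_le_contravar; nra. }
  lra.
Qed.

Lemma cosh_mul a b : 2 * cosh a * cosh b = cosh (a + b) + cosh (a - b).
Proof.
  unfold cosh, Rminus. rewrite !Ropp_plus_distr, Ropp_involutive, !exp_plus. lra.
Qed.

Lemma cosh_increment_le u v d : 0 <= u -> u <= v -> 0 <= d ->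
  cosh (u + d) - cosh u <= cosh (v + d) - cosh v.
Proof.
  intros hu huv hd.
  assert (E : forall x, cosh (x + d) - cosh x = (exp d - 1) / 2 * (exp x - exp (- x - d))).
  { intros x. unfold cosh.
    replace (- (x + d)) with (- x - d) by ring.
    replace (exp (- x)) with (exp (- x - d) * exp d)
      by (rewrite <- exp_plus; f_equal; ring).
    rewrite exp_plus. field. }
  rewrite !E.
  pose proof (exp_le_exp _ _ hd) as h1. rewrite exp_0 in h1.
  pose proof (exp_le_exp _ _ huv).
  pose proof (exp_le_exp (- v - d) (- u - d) ltac:(lra)).
  apply Rmult_le_compat_l; lra.
Qed.

Lemma cosh_pair_le x1 x2 y1 y2 : 0 <= y2 -> y2 <= y1 -> y1 <= x1 -> 0 <= x2 ->
  y1 + y2 <= x1 + x2 -> cosh y1 + cosh y2 <= cosh x1 + cosh x2.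
Proof.
  intros h1 h2 h3 h4 h5.
  destruct (Rle_lt_dec y2 x2) as [h | h].
  - pose proof (cosh_le y1 x1 ltac:(lra) h3). pose proof (cosh_le y2 x2 h1 h). lra.
  - pose proof (cosh_increment_le x2 y1 (x1 - y1) h4 ltac:(lra) ltac:(lra)) as hd.
    replace (y1 + (x1 - y1)) with x1 in hd by ring.
    pose proof (cosh_le y2 (x2 + (x1 - y1)) h1 ltac:(lra)). lra.
Qed.

Lemma tanh_exp u : tanh u = (exp u - / exp u) / (exp u + / exp u).
Proof.
  unfold tanh, sinh, cosh. rewrite exp_Ropp. pose proof (exp_pos u).
  field. split; nra.
Qed.

Lemma tanh_opp u : tanh (- u) = - tanh u.
Proof.
  rewrite !tanh_exp, exp_Ropp, Rinv_inv. pose proof (exp_pos u).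
  field. split; nra.
Qed.

Lemma tanh_nonneg u : 0 <= u -> 0 <= tanh u.
Proof.
  intros hu. unfold tanh. apply Rmult_le_pos.
  - unfold sinh. pose proof (exp_le_exp (- u) u ltac:(lra)). lra.
  - left. apply Rinv_0_lt_compat, cosh_pos.
Qed.

Lemma tanh_lt_1 u : tanh u < 1.
Proof.
  unfold tanh. pose proof (cosh_pos u). pose proof (exp_pos (- u)).
  apply (Rmult_lt_reg_r (cosh u)); [lra |].
  unfold Rdiv. rewrite Rmult_assoc, Rinv_l, Rmult_1_r, Rmult_1_l by lra.
  unfold sinh, cosh. lra.
Qed.

Lemma tanh_plus a b : tanh (a + b) = (tanh a + tanh b) / (1 + tanh a * tanh b).
Proof.
  rewrite !tanh_exp, exp_plus. pose proof (exp_pos a). pose proof (exp_pos b).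
  field. repeat split; try lra; nra.
Qed.

Lemma tanh_subadditive a b : 0 <= a -> 0 <= b -> tanh (a + b) <= tanh a + tanh b.
Proof.
  intros ha hb. rewrite tanh_plus.
  pose proof (tanh_nonneg a ha). pose proof (tanh_nonneg b hb).
  apply Rmult_le_reg_r with (1 + tanh a * tanh b); [nra |].
  unfold Rdiv. rewrite Rmult_assoc, Rinv_l by nra. nra.
Qed.

Lemma tanh_midpoint_le t k : 0 <= k <= t -> tanh (t + k) + tanh (t - k) <= 2 * tanh t.
Proof.
  intros hk. unfold Rminus. rewrite !tanh_plus, tanh_opp.
  pose proof (tanh_nonneg t ltac:(lra)). pose proof (tanh_nonneg k ltac:(lra)).
  pose proof (tanh_lt_1 t). pose proof (tanh_lt_1 k).
  set (A := tanh t) in *. set (B := tanh k) in *.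
  assert (e : 2 * A - ((A + B) / (1 + A * B) + (A + - B) / (1 + A * - B))
              = 2 * A * (B * B) * (1 - A * A) / ((1 + A * B) * (1 - A * B)))
    by (field; split; nra).
  assert (0 <= 2 * A * (B * B) * (1 - A * A) / ((1 + A * B) * (1 - A * B))).
  { assert (0 <= A * B <= A) by nra.
    apply Rmult_le_pos; [| left; apply Rinv_0_lt_compat; nra].
    apply Rmult_le_pos; [| nra]. apply Rmult_le_pos; nra. }
  lra.
Qed.

Lemma sinh_le_mul_cosh u : 0 <= u -> sinh u <= u * cosh u.
Proof.
  intros hu.
  set (F := fun x => x * cosh x - sinh x).
  assert (HF : forall x, is_derive F x (x * sinh x)).
  { intros x. unfold F, cosh, sinh. auto_derive; [easy | field]. }
  destruct (MVT_gen F 0 u (fun x => x * sinh x)) as [c [hc Hc]].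
  - intros x _. apply HF.
  - intros x _. apply continuity_pt_filterlim, (ex_derive_continuous (V := R_NormedModule)).
    eexists; apply HF.
  - rewrite Rmin_left, Rmax_right in hc by lra.
    unfold F in Hc. rewrite Rmult_0_l, sinh_0 in Hc.
    assert (0 <= sinh c) by (unfold sinh; pose proof (exp_le_exp (- c) c); lra).
    assert (0 <= c * sinh c * (u - 0)) by (apply Rmult_le_pos; [apply Rmult_le_pos |]; lra).
    lra.
Qed.

Lemma tanh_le u : 0 <= u -> tanh u <= u.
Proof.
  intros hu. pose proof (sinh_le_mul_cosh u hu). pose proof (cosh_pos u).
  unfold tanh. apply Rmult_le_reg_r with (cosh u); [lra |].
  unfold Rdiv. rewrite Rmult_assoc, Rinv_l by lra. lra.
Qed.

Lemma even_Rabs (f : R -> R) : (forall x, f (- x) = f x) -> forall x, f (Rabs x) = f x.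
Proof. intros Hf x. unfold Rabs. destruct (Rcase_abs x); [apply Hf | reflexivity]. Qed.

Lemma even_sum_Rabs (f : R -> R) : (forall x, f (- x) = f x) -> forall t k,
  f (t + k) + f (t - k) = f (Rabs t + Rabs k) + f (Rabs t - Rabs k).
Proof.
  intros Hf t k. unfold Rabs. destruct (Rcase_abs t), (Rcase_abs k).
  - replace (- t + - k) with (- (t + k)) by ring.
    replace (- t - - k) with (- (t - k)) by ring. rewrite !Hf. reflexivity.
  - replace (- t + k) with (- (t - k)) by ring.
    replace (- t - k) with (- (t + k)) by ring. rewrite !Hf. lra.
  - replace (t + - k) with (t - k) by ring. replace (t - - k) with (t + k) by ring. lra.
  - reflexivity.
Qed.

Section Tilt.

Variable w : R.
Hypothesis hw : 0 <= w <= 2.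

Definition tilt (u : R) : R := u - w / 2 * tanh u.

Lemma tilt_opp u : tilt (- u) = - tilt u.
Proof. unfold tilt. rewrite tanh_opp. ring. Qed.

Lemma tilt_bounds u : 0 <= u -> 0 <= tilt u <= u.
Proof.
  intros hu. pose proof (tanh_nonneg u hu). pose proof (tanh_le u hu).
  unfold tilt. split; nra.
Qed.

Lemma tilt_superadditive a b : 0 <= a -> 0 <= b -> tilt a + tilt b <= tilt (a + b).
Proof.
  intros ha hb. pose proof (tanh_subadditive a b ha hb).
  assert (0 <= w / 2 * (tanh a + tanh b - tanh (a + b))) by (apply Rmult_le_pos; lra).
  unfold tilt. lra.
Qed.

Lemma tilt_midpoint_convex t k : 0 <= k <= t -> 2 * tilt t <= tilt (t + k) + tilt (t - k).
Proof.
  intros hk. pose proof (tanh_midpoint_le t k hk).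
  assert (0 <= w / 2 * (2 * tanh t - (tanh (t + k) + tanh (t - k))))
    by (apply Rmult_le_pos; lra).
  unfold tilt. lra.
Qed.

Lemma cosh_tilt_opp u : cosh (tilt (- u)) = cosh (tilt u).
Proof. rewrite tilt_opp. apply cosh_opp. Qed.

Lemma cosh_tilt_le u : cosh (tilt u) <= cosh u.
Proof.
  pose proof (even_Rabs _ cosh_opp u) as Eu.
  pose proof (even_Rabs _ cosh_tilt_opp u) as Etu. cbv beta in Eu, Etu.
  rewrite <- Eu, <- Etu.
  pose proof (tilt_bounds (Rabs u) (Rabs_pos u)). apply cosh_le; lra.
Qed.

Lemma cosh_tilt_mul_le_ordered t k : 0 <= k <= t ->
  2 * cosh (tilt t) * cosh (tilt k) <= cosh (tilt (t + k)) + cosh (tilt (t - k)).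
Proof.
  intros hk. rewrite cosh_mul.
  pose proof (tilt_bounds k ltac:(lra)). pose proof (tilt_bounds (t - k) ltac:(lra)).
  pose proof (tilt_superadditive t k ltac:(lra) ltac:(lra)).
  pose proof (tilt_superadditive k (t - k) ltac:(lra) ltac:(lra)) as hsum.
  replace (k + (t - k)) with t in hsum by ring.
  pose proof (tilt_midpoint_convex t k hk).
  apply cosh_pair_le; lra.
Qed.

Lemma cosh_tilt_mul_le t k :
  2 * cosh (tilt t) * cosh (tilt k) <= cosh (tilt (t + k)) + cosh (tilt (t - k)).
Proof.
  pose proof (even_sum_Rabs _ cosh_tilt_opp t k) as Esum.
  pose proof (even_Rabs _ cosh_tilt_opp t) as Et.
  pose proof (even_Rabs _ cosh_tilt_opp k) as Ek. cbv beta in Esum, Et, Ek.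
  rewrite Esum, <- Et, <- Ek.
  pose proof (Rabs_pos t). pose proof (Rabs_pos k).
  destruct (Rle_lt_dec (Rabs k) (Rabs t)).
  - apply cosh_tilt_mul_le_ordered; lra.
  - pose proof (cosh_tilt_mul_le_ordered (Rabs k) (Rabs t) ltac:(lra)) as h.
    rewrite (Rplus_comm (Rabs k)), <- (cosh_tilt_opp (Rabs k - Rabs t)),
      Ropp_minus_distr in h.
    lra.
Qed.

Lemma cosh_tilt_key t k :
  2 * cosh (tilt t) * cosh k + 2 * cosh (tilt k) * cosh t
  <= 2 * cosh t * cosh k + cosh (tilt (t - k)) + cosh (tilt (t + k)).
Proof.
  pose proof (cosh_tilt_mul_le t k). pose proof (cosh_tilt_le t). pose proof (cosh_tilt_le k).
  assert (0 <= (cosh t - cosh (tilt t)) * (cosh k - cosh (tilt k)))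
    by (apply Rmult_le_pos; lra).
  nra.
Qed.

End Tilt.

Definition logistic (u : R) : R := (1 + tanh u) / 2.

Lemma logistic_exp u : logistic u = exp u / (2 * cosh u).
Proof.
  unfold logistic, tanh, sinh. pose proof (cosh_pos u). unfold cosh in *. field. lra.
Qed.

Lemma logistic_opp u : logistic (- u) = 1 - logistic u.
Proof. unfold logistic. rewrite tanh_opp. field. Qed.

Lemma logistic_bounds u : 0 < logistic u < 1.
Proof.
  rewrite logistic_exp. pose proof (exp_pos u). pose proof (exp_pos (- u)).
  pose proof (cosh_pos u). unfold cosh in *. split.
  - apply Rdiv_lt_0_compat; lra.
  - apply Rmult_lt_reg_r with (2 * ((exp u + exp (- u)) / 2)); [lra |].
    unfold Rdiv at 1. rewrite Rmult_assoc, Rinv_l by lra. lra.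
Qed.

Lemma logistic_surjective s : 0 < s < 1 -> exists u, logistic u = s.
Proof.
  intros hs. exists (ln (s / (1 - s)) / 2).
  set (u := ln (s / (1 - s)) / 2).
  assert (hu : exp u * exp u = s / (1 - s)).
  { rewrite <- exp_plus. replace (u + u) with (ln (s / (1 - s))) by (unfold u; field).
    apply exp_ln, Rdiv_lt_0_compat; lra. }
  rewrite logistic_exp. unfold cosh. rewrite exp_Ropp. pose proof (exp_pos u).
  replace (exp u / (2 * ((exp u + / exp u) / 2)))
    with (exp u * exp u / (exp u * exp u + 1)) by (field; split; nra).
  rewrite hu. field. lra.
Qed.

Lemma logistic_mul_add a b :
  logistic a * logistic b + logistic (- a) * logistic (- b)
  = cosh (a + b) / (2 * cosh a * cosh b).
Proof.
  rewrite !logistic_exp, !cosh_opp. pose proof (cosh_pos a). pose proof (cosh_pos b).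
  replace (cosh (a + b)) with ((exp a * exp b + exp (- a) * exp (- b)) / 2)
    by (unfold cosh; rewrite Ropp_plus_distr, !exp_plus; reflexivity).
  field. lra.
Qed.

Lemma logistic_posterior a b :
  logistic a * logistic b / (logistic a * logistic b + logistic (- a) * logistic (- b))
  = logistic (a + b).
Proof.
  rewrite logistic_mul_add, !logistic_exp, exp_plus.
  pose proof (cosh_pos a). pose proof (cosh_pos b). pose proof (cosh_pos (a + b)).
  field. lra.
Qed.

Definition bin_mim (w s : R) : R := s * exp (w * (1 - s)) + (1 - s) * exp (w * s).

Lemma bin_mim_degenerate w s : s * (1 - s) = 0 -> bin_mim w s = 1.
Proof.
  intros hs. unfold bin_mim.
  destruct (Rmult_integral _ _ hs) as [-> | h]; [| replace s with 1 by lra];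
    rewrite ?Rminus_0_r, ?Rminus_diag, Rmult_0_r, exp_0; ring.
Qed.

Lemma bin_mim_one_minus w s : bin_mim w (1 - s) = bin_mim w s.
Proof. unfold bin_mim. replace (1 - (1 - s)) with s by ring. ring. Qed.

Lemma bin_mim_half w : bin_mim w (1 / 2) = exp (w / 2).
Proof.
  unfold bin_mim. replace (w * (1 - 1 / 2)) with (w / 2) by field.
  replace (w * (1 / 2)) with (w / 2) by field. ring.
Qed.

Lemma bin_mim_logistic w u : bin_mim w (logistic u) = exp (w / 2) * cosh (tilt w u) / cosh u.
Proof.
  unfold bin_mim, tilt, cosh at 1.
  replace (w * (1 - logistic u)) with (w / 2 + - (w / 2 * tanh u)) by (unfold logistic; field).
  replace (w * logistic u) with (w / 2 + w / 2 * tanh u) by (unfold logistic; field).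
  replace (u - w / 2 * tanh u) with (u + - (w / 2 * tanh u)) by ring.
  rewrite Ropp_plus_distr, Ropp_involutive, !exp_plus, !exp_Ropp.
  pose proof (exp_pos (w / 2 * tanh u)). set (X := exp (w / 2 * tanh u)) in *.
  rewrite logistic_exp. pose proof (cosh_pos u). unfold cosh in *. rewrite exp_Ropp in *.
  pose proof (exp_pos u). field. repeat split; nra.
Qed.

Lemma interior_of_mul_one_minus_neq0 s : 0 <= s <= 1 -> s * (1 - s) <> 0 -> 0 < s < 1.
Proof. intros hs hs'. split; apply Rnot_le_lt; intros h; apply hs'; nra. Qed.

Lemma bin_mim_le_exp_half w s : 0 <= w <= 2 -> 0 <= s <= 1 -> bin_mim w s <= exp (w / 2).
Proof.
  intros hw hs.
  destruct (Req_dec (s * (1 - s)) 0) as [hdeg | hint].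
  - rewrite bin_mim_degenerate by exact hdeg.
    rewrite <- exp_0. apply exp_le_exp. lra.
  - destruct (logistic_surjective s) as [u <-];
      [exact (interior_of_mul_one_minus_neq0 s hs hint) |].
    rewrite bin_mim_logistic.
    pose proof (cosh_tilt_le w hw u). pose proof (cosh_pos u). pose proof (exp_pos (w / 2)).
    apply Rmult_le_reg_r with (cosh u); [lra |].
    unfold Rdiv. rewrite Rmult_assoc, Rinv_l by lra. nra.
Qed.

(* [joint_mim w a c] is the summand of the conditional MIM for an output letter of
   probability [a + c] whose posterior is [(a, c) / (a + c)]. *)
Definition joint_mim (w a c : R) : R :=
  a * exp (w * (c / (a + c))) + c * exp (w * (a / (a + c))).

Lemma joint_mim_degenerate w a c : a * c = 0 -> joint_mim w a c = a + c.
Proof.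
  intros hac. unfold joint_mim.
  destruct (Rmult_integral _ _ hac) as [-> | ->];
    rewrite Rdiv_0_l, Rmult_0_r, exp_0; ring.
Qed.

Lemma joint_mim_homogeneous w a c : 0 < a + c ->
  joint_mim w a c = (a + c) * bin_mim w (a / (a + c)).
Proof.
  intros h. unfold joint_mim, bin_mim.
  replace (1 - a / (a + c)) with (c / (a + c)) by (field; lra).
  field. lra.
Qed.

Lemma joint_mim_logistic w a b :
  joint_mim w (logistic a * logistic b) (logistic (- a) * logistic (- b))
  = exp (w / 2) * cosh (tilt w (a + b)) / (2 * cosh a * cosh b).
Proof.
  pose proof (logistic_bounds a). pose proof (logistic_bounds b).
  pose proof (logistic_bounds (- a)). pose proof (logistic_bounds (- b)).
  rewrite joint_mim_homogeneous by nra.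
  rewrite logistic_posterior, logistic_mul_add, bin_mim_logistic.
  pose proof (cosh_pos a). pose proof (cosh_pos b). pose proof (cosh_pos (a + b)).
  field. lra.
Qed.

Lemma cmim_summand w a c : 0 <= a -> 0 <= c ->
  (if Rlt_dec 0 (a + c)
   then (a + c) * (a / (a + c) * exp (w * (1 - a / (a + c))) +
                   c / (a + c) * exp (w * (1 - c / (a + c))))
   else 0) = joint_mim w a c.
Proof.
  intros ha hc. destruct (Rlt_dec 0 (a + c)) as [h | h].
  - unfold joint_mim.
    replace (1 - a / (a + c)) with (c / (a + c)) by (field; lra).
    replace (1 - c / (a + c)) with (a / (a + c)) by (field; lra).
    field. lra.
  - rewrite joint_mim_degenerate; lra || nra.
Qed.

Lemma mim_loss_bsc w b p : 0 <= p <= 1 -> 0 <= b <= 1 ->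
  mim_loss w b p = bin_mim w p
    - (joint_mim w (p * (1 - b)) ((1 - p) * b) + joint_mim w (p * b) ((1 - p) * (1 - b))).
Proof.
  intros hp hb.
  unfold mim_loss, MIM, CMIM, posterior, out_law, bsum, bin_input, bsc. simpl.
  rewrite !cmim_summand by nra. unfold bin_mim.
  replace (1 - (1 - p)) with p by ring. ring.
Qed.

Lemma mim_loss_degenerate w b p : 0 <= p <= 1 -> 0 <= b <= 1 ->
  p * (1 - p) * (b * (1 - b)) = 0 -> mim_loss w b p = bin_mim w p - 1.
Proof.
  intros hp hb hdeg. rewrite mim_loss_bsc by assumption.
  rewrite !joint_mim_degenerate by (rewrite <- hdeg; ring). ring.
Qed.

Lemma mim_loss_logistic_le w t k : 0 <= w <= 2 ->
  mim_loss w (logistic k) (logistic t) <= exp (w / 2) - bin_mim w (logistic k).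
Proof.
  intros hw. pose proof (logistic_bounds t). pose proof (logistic_bounds k).
  rewrite mim_loss_bsc by lra. rewrite <- !logistic_opp.
  pose proof (joint_mim_logistic w t (- k)) as Jminus.
  rewrite Ropp_involutive, cosh_opp, <- Rminus_def in Jminus.
  rewrite Jminus, joint_mim_logistic, !bin_mim_logistic.
  pose proof (cosh_tilt_key w hw t k).
  pose proof (cosh_pos t). pose proof (cosh_pos k). pose proof (exp_pos (w / 2)).
  set (E := exp (w / 2)) in *. set (ct := cosh t) in *. set (ck := cosh k) in *.
  set (Ct := cosh (tilt w t)) in *. set (Ck := cosh (tilt w k)) in *.
  set (Cm := cosh (tilt w (t - k))) in *. set (Cp := cosh (tilt w (t + k))) in *.
  assert (e : E - E * Ck / ck - (E * Ct / ct - (E * Cm / (2 * ct * ck) + E * Cp / (2 * ct * ck)))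
              = E / (2 * ct * ck) * (2 * ct * ck + Cm + Cp - 2 * Ct * ck - 2 * Ck * ct))
    by (field; lra).
  assert (0 <= E / (2 * ct * ck) * (2 * ct * ck + Cm + Cp - 2 * Ct * ck - 2 * Ck * ct)).
  { apply Rmult_le_pos; [apply Rlt_le, Rdiv_lt_0_compat; nra | lra]. }
  lra.
Qed.

Lemma mim_loss_half w b : 0 <= b <= 1 -> mim_loss w b (1 / 2) = exp (w / 2) - bin_mim w b.
Proof.
  intros hb. rewrite mim_loss_bsc by lra. rewrite !joint_mim_homogeneous by lra.
  replace (1 / 2 * (1 - b) + (1 - 1 / 2) * b) with (1 / 2) by field.
  replace (1 / 2 * b + (1 - 1 / 2) * (1 - b)) with (1 / 2) by field.
  replace (1 / 2 * (1 - b) / (1 / 2)) with (1 - b) by field.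
  replace (1 / 2 * b / (1 / 2)) with b by field.
  rewrite bin_mim_one_minus, bin_mim_half. field.
Qed.

Theorem proposition1 (w b : R) (hw : 0 < w < 2) (hb : 0 <= b <= 1) :
  (forall p : R, 0 <= p <= 1 ->
     mim_loss w b p <= exp (w / 2) - (b * exp (w * (1 - b)) + (1 - b) * exp (w * b)))
  /\ mim_loss w b (1 / 2) =
     exp (w / 2) - (b * exp (w * (1 - b)) + (1 - b) * exp (w * b)).
Proof.
  change (b * exp (w * (1 - b)) + (1 - b) * exp (w * b)) with (bin_mim w b).
  assert (hw' : 0 <= w <= 2) by lra.
  split; [| exact (mim_loss_half w b hb)].
  intros p hp.
  destruct (Req_dec (p * (1 - p) * (b * (1 - b))) 0) as [hdeg | hint].
  - rewrite mim_loss_degenerate by assumption.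
    pose proof (bin_mim_le_exp_half w p hw' hp). pose proof (bin_mim_le_exp_half w b hw' hb).
    destruct (Rmult_integral _ _ hdeg) as [hp01 | hb01].
    + rewrite (bin_mim_degenerate w p hp01). lra.
    + rewrite (bin_mim_degenerate w b hb01). lra.
  - assert (hp' : p * (1 - p) <> 0) by (intros h; apply hint; rewrite h; ring).
    assert (hb' : b * (1 - b) <> 0) by (intros h; apply hint; rewrite h; ring).
    destruct (logistic_surjective p) as [t <-];
      [exact (interior_of_mul_one_minus_neq0 p hp hp') |].
    destruct (logistic_surjective b) as [k <-];
      [exact (interior_of_mul_one_minus_neq0 b hb hb') |].
    apply mim_loss_logistic_le, hw'.
Qed.
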